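(* Let $w\in\mathcal W$, $u,\delta\in\mathcal X^*$ with $\|u\|_*\ne0$ and $\|u+\delta\|_*\ne0$, and $\eta>0$. Then $$\Big\langle u,P\Big(w,\frac{u+\delta}{\|u+\delta\|_*},\eta\Big)\Big\rangle\ge\frac14\Big\langle u,P\Big(w,\frac{u}{\|u\|_*},\frac\eta2\Big)\Big\rangle-2\|\delta\|_*.$$
   Context: $(\mathcal X,\|\cdot\|)$ is a reflexive Banach space with dual $(\mathcal X^*,\|\cdot\|_* )$, $\|u\|_*=\sup_{\|x\|\le1}\langle u,x\rangle$, and $\langle\cdot,\cdot\rangle$ the duality pairing. $\mathcal W\subseteq\mathcal X$ is nonempty, closed and convex. Mirror map: $\Phi:\mathcal D\to\mathbb R\cup\{+\infty\}$, $\mathcal D\subseteq\mathcal X$, proper, weakly lower semicontinuous, $1$-strongly convex on $\mathcal W\subseteq\mathrm{int}(\mathcal D)$ with respect to $\|\cdot\|$, and Gâteaux differentiable on $\mathcal W$. Bregman divergence $D_\Phi(x,y)=\Phi(x)-\Phi(y)-\langle\nabla\Phi(y),x-y\rangle$. Proximal gradient mapping: for $w\in\mathcal W$, $u\in\mathcal X^*$, $\eta>0$, $P(w,u,\eta)=(w-w^+)/\eta$ where $w^+=\arg\min_{w'\in\mathcal W}\{\langle\eta u,w'\rangle+D_\Phi(w',w)\}$ (this minimizer exists and is unique). *)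

From HB Require Import structures.
From mathcomp Require Import all_boot all_order all_algebra.
From mathcomp Require Import all_classical all_reals all_analysis.
Set Implicit Arguments. Unset Strict Implicit. Unset Printing Implicit Defensive.
Import Order.TTheory GRing.Theory Num.Theory.
Import numFieldNormedType.Exports.
Local Open Scope classical_set_scope.
Local Open Scope ring_scope.

Section Defs.
Variables (R : realType) (X : normedModType R).

Definition is_dual (u : X -> R) : Prop :=
  (forall (a : R) (x y : X), u (a *: x + y) = a * u x + u y) /\ continuous u.

Definition dnorm (u : X -> R) : R := sup [set u x | x in [set x : X | `|x| <= 1]].

(* Reflexivity: the canonical embedding X -> X^** is surjective, i.e. every
   bounded linear functional on X^* is evaluation at some point of X. *)
Definition reflexive_space : Prop :=
  forall phi : (X -> R) -> R,
    (forall (a : R) (f g : X -> R), is_dual f -> is_dual g ->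
       phi (fun x => a * f x + g x) = a * phi f + phi g) ->
    (exists C : R, forall f, is_dual f -> `|phi f| <= C * dnorm f) ->
    exists x : X, forall f, is_dual f -> phi f = f x.

Definition weakly_open (A : set X) : Prop :=
  forall x, A x -> exists (n : nat) (F : 'I_n -> X -> R) (e : R),
    0 < e /\ (forall i, is_dual (F i)) /\
    [set y | forall i, `|F i y - F i x| < e] `<=` A.

Definition weakly_closed (C : set X) : Prop := weakly_open (~` C).

Definition proper_on (D : set X) (Phi : X -> \bar R) : Prop :=
  (exists x, D x /\ (Phi x < +oo)%E) /\ (forall x, D x -> Phi x != -oo%E).

Definition weakly_lsc_on (D : set X) (Phi : X -> \bar R) : Prop :=
  forall t : R, exists C : set X, weakly_closed C /\
    [set x | D x /\ (Phi x <= t%:E)%E] = D `&` C.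

Definition strongly_convex1_on (W : set X) (Phi : X -> \bar R) : Prop :=
  forall x y (t : R), W x -> W y -> 0 <= t <= 1 ->
    (Phi (t *: x + (1 - t) *: y)%R <=
       t%:E * Phi x + (1 - t)%:E * Phi y - (t * (1 - t) / 2 * `|x - y| ^+ 2)%:E)%E.

Definition gateaux_deriv (Phi : X -> \bar R) (y : X) (g : X -> R) : Prop :=
  is_dual g /\ Phi y \is a fin_num /\
  forall v : X,
    (\forall t \near (0 : R), Phi (y + t *: v) \is a fin_num) /\
    ((fun t : R => (fine (Phi (y + t *: v)) - fine (Phi y)) / t) @ (0 : R)^'
       --> g v).

Definition bregman (Phi : X -> \bar R) (gradPhi : X -> X -> R) (x y : X) : \bar R :=
  (Phi x - Phi y - (gradPhi y (x - y)%R)%:E)%E.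

Definition is_prox_point (W : set X) (Phi : X -> \bar R) (gradPhi : X -> X -> R)
  (w : X) (u : X -> R) (eta : R) (wp : X) : Prop :=
  W wp /\ forall w', W w' ->
    ((eta * u wp)%:E + bregman Phi gradPhi wp w <=
       (eta * u w')%:E + bregman Phi gradPhi w' w)%E.

(* the proximal gradient mapping P(w,u,eta) = (w - w^+)/eta *)
Definition prox_grad (w wp : X) (eta : R) : X := eta^-1 *: (w - wp).

End Defs.

(* Strong convexity of the mirror map makes the prox points satisfy a
   monotonicity inequality: for prox points z1, z2 of step sizes eta1, eta2 and
   directions v1, v2 from the same w,  |z1 - z2|^2 <= <eta2 v2 - eta1 v1, z1 - z2>.
   With v1 = (u + delta)/|u + delta|_*, v2 = u/|u|_*, and the dual-norm bounds
   | |u + delta|_* - |u|_* | <= |delta|_*, this inequality forces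
   <u, z1 - z2> <= 2 eta |delta|_*.  Since also <u, w - z2> >= 0 (a prox step
   never increases the linear part), <u, w - z1> >= <u, w - z2>/2 - 2 eta |delta|_*,
   which is the claim after dividing by eta. *)

From HB Require Import structures.
From mathcomp Require Import all_boot all_order all_algebra.
From mathcomp Require Import all_classical all_reals all_analysis.
From mathcomp Require Import ring lra.
Import Order.TTheory GRing.Theory Num.Theory.
Import numFieldNormedType.Exports.
Set Implicit Arguments. Unset Strict Implicit. Unset Printing Implicit Defensive.
Local Open Scope classical_set_scope.
Local Open Scope ring_scope.

Section DualNorm.
Variables (R : realType) (X : normedModType R).
Implicit Types (u v : X -> R) (x y : X).

Lemma dualB u : is_dual u -> {morph u : x y / x - y}.
Proof. by case=> /GRing.zmod_morphism_linear. Qed.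

Lemma dual0 u : is_dual u -> u 0 = 0.
Proof. by move=> hu; rewrite -(subrr (0 : X)) dualB // subrr. Qed.

Lemma dualZ u a x : is_dual u -> u (a *: x) = a * u x.
Proof. by move=> [/GRing.scalable_linear su _]; exact: su. Qed.

Lemma dualN u x : is_dual u -> u (- x) = - u x.
Proof. by move=> hu; rewrite -scaleN1r dualZ // mulN1r. Qed.

Lemma is_dualD u v : is_dual u -> is_dual v -> is_dual (fun x => u x + v x).
Proof.
move=> [lu cu] [lv cv]; split; last by move=> x; exact: (continuousD (cu x) (cv x)).
by move=> a x y; rewrite lu lv; ring.
Qed.

Lemma is_dual_divr u c : is_dual u -> is_dual (fun x => u x / c).
Proof.
move=> [lu cu]; split; last by move=> x; exact: cvgMl (cu x).
by move=> a x y; rewrite lu; ring.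
Qed.

Lemma dual_bounded u : is_dual u -> exists2 M, 0 <= M & forall x, `|u x| <= M * `|x|.
Proof.
move=> [lu cu].
pose uL : {linear X -> R^o} := HB.pack u (GRing.isLinear.Build R X R^o *:%R u lu).
have /linear_boundedP [M [_ hM]] := continuous_linear_bounded 0 (cu 0 : {for 0, continuous uL}).
by exists (`|M| + 1) => //; apply: hM; rewrite (le_lt_trans (ler_norm M)) ?ltrDl.
Qed.

Lemma dnorm_ub u x : is_dual u -> `|x| <= 1 -> u x <= dnorm u.
Proof.
move=> /dual_bounded [M M0 hM] x1; apply: ub_le_sup; last by exists x.
exists M => _ [y y1 <-]; apply: le_trans (ler_norm _) _.
by apply: le_trans (hM y) _; rewrite ler_piMr.
Qed.

Lemma dnorm_le u c : (forall x, `|x| <= 1 -> u x <= c) -> dnorm u <= c.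
Proof.
move=> hc; apply: ge_sup; first by exists (u 0), 0 => //=; rewrite normr0.
by move=> _ [y y1 <-]; exact: hc.
Qed.

Lemma normr_dual_le u x : is_dual u -> `|u x| <= dnorm u * `|x|.
Proof.
move=> hu; have [->|x0] := eqVneq x 0.
  by rewrite dual0 // !normr0 mulr0.
have nx0 : 0 < `|x| by rewrite normr_gt0.
set y := `|x|^-1 *: x.
have y1 : `|y| <= 1 by rewrite normrZ normfV normr_id mulVf ?gt_eqF.
have -> : u x = `|x| * u y by rewrite -dualZ // scalerA mulfV ?gt_eqF // scale1r.
rewrite normrM normr_id mulrC ler_pM2r // ler_norml dnorm_ub // andbT.
by rewrite lerNl -dualN // dnorm_ub ?normrN.
Qed.

Lemma dnorm_ge0 u : is_dual u -> 0 <= dnorm u.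
Proof. by move=> hu; rewrite -(dual0 hu) dnorm_ub ?normr0. Qed.

Lemma dnorm_gt0 u : is_dual u -> dnorm u != 0 -> 0 < dnorm u.
Proof. by move=> hu nu0; rewrite lt_neqAle eq_sym nu0 dnorm_ge0. Qed.

Lemma dnormD_le u v : is_dual u -> is_dual v ->
  dnorm (fun x => u x + v x) <= dnorm u + dnorm v.
Proof. by move=> hu hv; apply: dnorm_le => x x1; apply: lerD; apply: dnorm_ub. Qed.

Lemma dnorm_dist_le u v : is_dual u -> is_dual v ->
  `|dnorm (fun x => u x + v x) - dnorm u| <= dnorm v.
Proof.
move=> hu hv; rewrite ler_distl dnormD_le // andbT lerBlDr.
apply: dnorm_le => x x1.
have -> : u x = (u x + v x) + v (- x) by rewrite dualN // addrK.
apply: lerD; first exact: dnorm_ub (is_dualD hu hv) _.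
by apply: dnorm_ub; rewrite ?normrN.
Qed.

End DualNorm.

(* If [d < a], then [a (U + D) / b - U >= - 2 d r], so the last hypothesis gives
   [eta U / 2 <= 2 eta d r - a r^2 <= (eta d)^2 / a]; if [a <= d], it forces
   [r <= 2 eta] and we use [U <= a r]. *)
Lemma normalized_gap_le (R : realFieldType) (a b d eta r U D : R) :
  0 < a -> 0 < b -> 0 < eta -> `|b - a| <= d ->
  `|U| <= a * r -> `|U + D| <= b * r -> `|D| <= d * r ->
  r ^+ 2 <= eta / 2 * (U / a) - eta * ((U + D) / b) -> U <= 2 * eta * d.
Proof.
move=> a0 b0 eta0 dab Ur UDr Dr.
have d0 : 0 <= d := le_trans (normr_ge0 _) dab.
have r0 : 0 <= r by rewrite -(pmulr_rge0 _ a0) (le_trans (normr_ge0 _) Ur).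
set Q := U / a; set V := (U + D) / b => mono.
have eU : U = a * Q by rewrite mulrC divfK ?gt_eqF.
have eV : U + D = b * V by rewrite mulrC divfK ?gt_eqF.
have /ler_normlP[Qr1 Qr2] : `|Q| <= r.
  by rewrite normrM normfV (gtr0_norm a0) ler_pdivrMr // mulrC.
have /ler_normlP[Vr1 Vr2] : `|V| <= r.
  by rewrite normrM normfV (gtr0_norm b0) ler_pdivrMr // mulrC.
have [ad|da] := leP a d.
  have r_le : r <= 2 * eta by nra.
  have aQ : a * Q <= a * r by rewrite ler_pM2l.
  have : a * r <= d * (2 * eta) by apply: ler_pM; lra.
  by rewrite eU; lra.
have aVU : - (2 * d * r) <= a * V - U.
  have -> : a * V - U = (a - b) * V + D by rewrite eU; lra.
  have /ler_normlP[abV _] : `|(a - b) * V| <= d * r.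
    by rewrite normrM distrC ler_pM //; apply/ler_normlP.
  by move: Dr => /ler_normlP[? _]; lra.
have h1 : eta * U / 2 <= 2 * eta * d * r - a * r ^+ 2.
  have := ler_wpM2l (ltW a0) mono; have := ler_wpM2l (ltW eta0) aVU.
  by rewrite eU; lra.
have h2 : a * (eta * U / 2) <= (eta * d) ^+ 2.
  have := ler_wpM2l (ltW a0) h1; have := sqr_ge0 (a * r - eta * d); lra.
have e2d : 0 <= 2 * eta ^+ 2 * d by rewrite mulr_ge0 // mulr_ge0 ?sqr_ge0.
have dda := ler_wpM2l e2d (ltW da).
rewrite -(ler_pM2l a0) -(ler_pM2l eta0); lra.
Qed.

Lemma convex_set_segment (R : realType) (X : normedModType R) (W : set X) x y (t : R) :
  convex_set W -> W x -> W y -> 0 <= t <= 1 -> W (t *: x + (1 - t) *: y).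
Proof.
move=> cW Wx Wy /andP[t0 t1].
by have := cW x y (Itv01 t0 t1) (mem_set Wx) (mem_set Wy); rewrite inE.
Qed.

Section StronglyConvex.
Variables (R : realType) (X : normedModType R).
Variables (W : set X) (Phi : X -> \bar R) (gradPhi : X -> X -> R).
Hypothesis convW : convex_set W.
Hypothesis scPhi : strongly_convex1_on W Phi.
Hypothesis gradPhiP : forall y, W y -> gateaux_deriv Phi y (gradPhi y).

Local Notation phi x := (fine (Phi x)).

Lemma fin_Phi y : W y -> Phi y \is a fin_num.
Proof. by case/gradPhiP=> _ []. Qed.

Lemma dual_gradPhi y : W y -> is_dual (gradPhi y).
Proof. by case/gradPhiP. Qed.

Lemma strongly_convex_fine x y t : W x -> W y -> 0 <= t <= 1 ->
  phi (t *: x + (1 - t) *: y) <=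
    t * phi x + (1 - t) * phi y - t * (1 - t) / 2 * `|x - y| ^+ 2.
Proof.
move=> Wx Wy t01; have := scPhi Wx Wy t01.
rewrite -(fineK (fin_Phi (convex_set_segment convW Wx Wy t01))).
by rewrite -(fineK (fin_Phi Wx)) -(fineK (fin_Phi Wy)) -!EFinM -EFinD lee_fin.
Qed.

Lemma quadratic_growth (h : X -> R) z : scalar h -> W z ->
  (forall x, W x -> phi z + h z <= phi x + h x) ->
  forall x, W x -> phi z + h z + `|x - z| ^+ 2 / 2 <= phi x + h x.
Proof.
move=> hl Wz zmin x Wx.
set N := `|x - z| ^+ 2; set c := phi x + h x - (phi z + h z).
have N0 : 0 <= N by rewrite exprn_ge0.
have along_segment t : 0 < t <= 1 -> (1 - t) * (N / 2) <= c.
  move=> /andP[t0 t1]; have t01 : 0 <= t <= 1 by rewrite ltW.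
  have hseg : h (t *: x + (1 - t) *: z) = t * h x + (1 - t) * h z.
    by rewrite hl (GRing.scalable_linear hl).
  have := zmin _ (convex_set_segment convW Wx Wz t01).
  have := strongly_convex_fine Wx Wz t01; rewrite hseg -/N => sc opt.
  have : t * ((1 - t) * (N / 2)) <= t * c by rewrite /c; lra.
  by rewrite ler_pM2l.
rewrite -lerBrDl -/c; apply/ler_addgt0Pr => e e0.
have Ne0 : 0 < N / 2 + e by lra.
set t := e / (N / 2 + e).
have t0 : 0 < t by rewrite divr_gt0.
have t1 : t <= 1 by rewrite ler_pdivrMr // mul1r; lra.
have tN : t * (N / 2) <= e by rewrite mulrAC ler_pdivrMr //; nra.
have := along_segment t; rewrite t0 t1 => /(_ isT); lra.
Qed.

Lemma gateaux_subgradient w x : W w -> W x ->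
  gradPhi w (x - w) <= phi x - phi w.
Proof.
move=> Ww Wx; have [_ [_ /(_ (x - w))[_ dPhi]]] := gradPhiP Ww.
apply: (ler_cvg_to (cvg_dnbhs_at_right dPhi) (cvg_cst (phi x - phi w))).
near=> t.
have t0 : 0 < t by near: t; exact: nbhs_right_gt.
have t1 : t < 1 by near: t; exact: nbhs_right_lt.
have t01 : 0 <= t <= 1 by rewrite !ltW.
have -> : w + t *: (x - w) = t *: x + (1 - t) *: w.
  by rewrite scalerBr scalerBl scale1r addrCA.
have := strongly_convex_fine Wx Ww t01.
have := exprn_ge0 2 (normr_ge0 (x - w)).
by rewrite ler_pdivrMr //; nra.
Unshelve. all: by end_near.
Qed.

Section ProxPoint.
Variables (w : X) (v : X -> R) (eta : R) (z : X).
Hypotheses (Ww : W w) (dual_v : is_dual v).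
Hypothesis proxz : is_prox_point W Phi gradPhi w v eta z.

Let dual_G : is_dual (gradPhi w) := dual_gradPhi Ww.

Lemma prox_point_min : W z /\
  forall x, W x -> phi z + (eta * v z - gradPhi w z) <= phi x + (eta * v x - gradPhi w x).
Proof.
have [Wz zmin] := proxz; split => // x Wx; have := zmin x Wx.
rewrite /bregman -(fineK (fin_Phi Wz)) -(fineK (fin_Phi Ww)) -(fineK (fin_Phi Wx)).
by rewrite -!EFinB -!EFinD lee_fin !(dualB dual_G); lra.
Qed.

Lemma prox_point_growth x : W x ->
  phi z + (eta * v z - gradPhi w z) + `|x - z| ^+ 2 / 2 <= phi x + (eta * v x - gradPhi w x).
Proof.
have [Wz zmin] := prox_point_min.
apply: (quadratic_growth (h := fun y => eta * v y - gradPhi w y)) => //.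
by move=> a y y'; rewrite (proj1 dual_v) (proj1 dual_G); ring.
Qed.

Lemma prox_point_descent : `|w - z| ^+ 2 / 2 <= eta * v (w - z).
Proof.
have := prox_point_growth Ww; have := gateaux_subgradient Ww (proj1 prox_point_min).
by rewrite (dualB dual_v) !(dualB dual_G); lra.
Qed.

End ProxPoint.

Lemma prox_points_monotone w (v1 v2 : X -> R) eta1 eta2 z1 z2 :
  W w -> is_dual v1 -> is_dual v2 ->
  is_prox_point W Phi gradPhi w v1 eta1 z1 ->
  is_prox_point W Phi gradPhi w v2 eta2 z2 ->
  `|z1 - z2| ^+ 2 <= eta2 * v2 (z1 - z2) - eta1 * v1 (z1 - z2).
Proof.
move=> Ww dv1 dv2 prox1 prox2.
have [Wz1 _] := prox_point_min Ww prox1.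
have [Wz2 _] := prox_point_min Ww prox2.
have := prox_point_growth Ww dv1 prox1 Wz2.
have := prox_point_growth Ww dv2 prox2 Wz1.
by rewrite distrC !(dualB dv1) !(dualB dv2); lra.
Qed.

Lemma prox_normalized_gap_le w (u delta : X -> R) eta z1 z2 :
  W w -> is_dual u -> is_dual delta -> 0 < eta ->
  dnorm u != 0 -> dnorm (fun x => u x + delta x) != 0 ->
  is_prox_point W Phi gradPhi w
    (fun x => (u x + delta x) / dnorm (fun y => u y + delta y)) eta z1 ->
  is_prox_point W Phi gradPhi w (fun x => u x / dnorm u) (eta / 2) z2 ->
  u (z1 - z2) <= 2 * eta * dnorm delta.
Proof.
move=> Ww du ddelta eta0 nu0 nud0 prox1 prox2.
have dud := is_dualD du ddelta.
have mono := prox_points_monotone Ww (is_dual_divr _ dud) (is_dual_divr _ du) prox1 prox2.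
apply: (normalized_gap_le _ _ eta0 (dnorm_dist_le du ddelta) _ _ _ mono).
- exact: dnorm_gt0.
- exact: dnorm_gt0.
- exact: normr_dual_le.
- exact: (normr_dual_le _ dud).
- exact: normr_dual_le.
Qed.

End StronglyConvex.

Theorem mainTheorem8 (R : realType) (X : completeNormedModType R)
  (W D : set X) (Phi : X -> \bar R) (gradPhi : X -> X -> R)
  (hrefl : reflexive_space X)
  (hW0 : W !=set0) (hWcl : closed W) (hWcv : convex_set W)
  (hWD : W `<=` interior D)
  (hprop : proper_on D Phi) (hlsc : weakly_lsc_on D Phi)
  (hsc : strongly_convex1_on W Phi)
  (hgrad : forall y, W y -> gateaux_deriv Phi y (gradPhi y))
  (w : X) (u delta : X -> R) (eta : R)
  (hw : W w) (hu : is_dual u) (hdelta : is_dual delta)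
  (hu0 : dnorm u != 0) (hud0 : dnorm (fun x => u x + delta x) != 0)
  (heta : 0 < eta)
  (w1 w2 : X)
  (hw1 : is_prox_point W Phi gradPhi w
           (fun x => (u x + delta x) / dnorm (fun y => u y + delta y)) eta w1)
  (hw2 : is_prox_point W Phi gradPhi w
           (fun x => u x / dnorm u) (eta / 2) w2) :
  u (prox_grad w w1 eta) >=
    4^-1 * u (prox_grad w w2 (eta / 2)) - 2 * dnorm delta.
Proof.
have gap := prox_normalized_gap_le hWcv hsc hgrad hw hu hdelta heta hu0 hud0 hw1 hw2.
have descent : 0 <= u (w - w2).
  have := prox_point_descent hWcv hsc hgrad hw (is_dual_divr _ hu) hw2.
  have := divr_ge0 (exprn_ge0 2 (normr_ge0 (w - w2))) (ler0n R 2).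
  move=> /le_trans/[apply]; rewrite pmulr_rge0 ?divr_gt0 //.
  by rewrite pmulr_lge0 ?invr_gt0 ?dnorm_gt0.
have gap' : eta^-1 * u (w1 - w2) <= 2 * dnorm delta.
  by rewrite mulrC ler_pdivrMr // mulrAC.
have descent' : 0 <= eta^-1 * u (w - w2) by rewrite mulr_ge0 // invr_ge0 ltW.
have -> : u (prox_grad w w1 eta) = eta^-1 * (u (w - w2) - u (w1 - w2)).
  by rewrite dualZ // !(dualB hu) opprB addrA subrK.
rewrite /prox_grad dualZ // invf_div; lra.
Qed.
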